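(* Let $K_\infty=s_1s_2s_3\dots$ be the fixed point beginning with $1$ of the substitution $1\mapsto10$, $0\mapsto11$, let $t_k=\sum_{i=1}^k s_i\pmod 2$, $\epsilon_k=1-2t_k=(-1)^{\sum_{i=1}^k s_i}$, and $\tau_\infty=\sum_{k\ge1}t_k2^{-k}$. Let $\Xi(z)=\prod_{n=0}^\infty(1-z^{2^n})$ for $|z|<1$. Then $\Xi(z)=1+\sum_{k\ge1}\epsilon_kz^k$ as power series, $\Xi(z)=(1-z)\Xi(z^2)$, and $\tau_\infty=1-\frac12\,\Xi(1/2)$. *)

From HB Require Import structures.
From mathcomp Require Import all_boot all_order all_algebra.
From mathcomp Require Import complex.
From mathcomp Require Import all_classical all_reals all_analysis.
Set Implicit Arguments. Unset Strict Implicit. Unset Printing Implicit Defensive.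
Import Order.TTheory GRing.Theory Num.Theory.
Import numFieldNormedType.Exports.
Local Open Scope ring_scope.

(* Letters of the alphabet {0,1} are encoded as booleans: true = 1, false = 0.
   An infinite word s_1 s_2 s_3 ... is a function s : nat -> bool, where only
   the values at indices k >= 1 are relevant. *)

Definition Ksubst (a : bool) : seq bool := if a then [:: true; false] else [:: true; true].

Definition Ksubst_word (w : seq bool) : seq bool := flatten (map Ksubst w).

Definition prefix (s : nat -> bool) (n : nat) : seq bool := [seq s i | i <- iota 1 n].

(* s is a fixed point of the substitution (extended to infinite words):
   for every n, the image of the prefix of length n is a prefix of s. *)
Definition is_Kfixed_point (s : nat -> bool) : Prop :=
  forall n i, (i < size (Ksubst_word (prefix s n)))%N ->
    nth false (Ksubst_word (prefix s n)) i = s i.+1.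

Definition ssum (s : nat -> bool) (k : nat) : nat := (\sum_(1 <= i < k.+1) s i)%N.

Definition tk (s : nat -> bool) (k : nat) : nat := (ssum s k %% 2)%N.

Definition epsk {R : pzRingType} (s : nat -> bool) (k : nat) : R := (-1) ^+ ssum s k.

Definition Xi_partial {R : pzRingType} (z : R) (N : nat) : R :=
  \prod_(n < N) (1 - z ^+ (2 ^ n)%N).

Definition Xi {R : numFieldType} (z : R) : R := limn (Xi_partial z).

Set Warnings "-notation-overridden,-ambiguous-paths,-notation-incompatible-prefix".
From Pilot Require Import Defs.
From HB Require Import structures.
From mathcomp Require Import all_boot all_order all_algebra.
From mathcomp Require Import complex.
From mathcomp Require Import zify ring.
From mathcomp Require Import all_classical all_reals all_analysis.
Import Order.TTheory GRing.Theory Num.Theory.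
Import numFieldNormedType.Exports.
Local Open Scope classical_set_scope.
Local Open Scope ring_scope.
Local Open Scope complex_scope.

(* The fixed point satisfies s_(2m+1) = 1 and s_(2m+2) = 1 - s_(m+1), hence
   S(2k) + S(k) = 2k for the partial sums S, i.e. eps_(2k) = eps_k and
   eps_(2k+1) = -eps_k.  These are exactly the recurrences saying that the
   partial product prod_(n<N) (1 - z^(2^n)) is the partial sum of
   sum_k eps_k z^k up to 2^N.  As |eps_k| = 1 the series converges for
   |z| < 1, so the product converges to it, the functional equation passes to
   the limit, and t_k = (1 - eps_k)/2 turns tau into
   (sum_k 2^-k - Xi(1/2))/2 = 1 - Xi(1/2)/2. *)

Section FixedPoint.
Context {s : nat -> bool}.

Lemma Ksubst_word_rcons w a : Ksubst_word (rcons w a) = Ksubst_word w ++ Ksubst a.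
Proof. by rewrite /Ksubst_word map_rcons -cats1 flatten_cat /= cats0. Qed.

Lemma size_Ksubst_word w : size (Ksubst_word w) = (size w).*2.
Proof.
elim/last_ind: w => [//|w a IHw].
rewrite Ksubst_word_rcons size_cat IHw size_rcons doubleS.
by case: a => /=; rewrite addn2.
Qed.

Lemma prefixS n : Defs.prefix s n.+1 = rcons (Defs.prefix s n) (s n.+1).
Proof. by rewrite /Defs.prefix -[n.+1]addn1 iotaD map_cat cats1 addnC. Qed.

Lemma size_prefix n : size (Defs.prefix s n) = n.
Proof. by rewrite size_map size_iota. Qed.

Lemma ssumS k : ssum s k.+1 = (ssum s k + s k.+1)%N.
Proof. by rewrite /ssum big_nat_recr. Qed.

Hypothesis hfix : is_Kfixed_point s.

Lemma Kfixed_pointE m i : (i < 2)%N ->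
  s (m.*2 + i).+1 = nth false (Ksubst (s m.+1)) i.
Proof.
move=> i_lt2; rewrite -(hfix m.+1); last first.
  by rewrite size_Ksubst_word size_prefix doubleS; lia.
by rewrite prefixS Ksubst_word_rcons nth_cat size_Ksubst_word size_prefix
  ltnNge leq_addr addKn.
Qed.

Lemma Kfixed_point_odd m : s m.*2.+1 = true.
Proof. by rewrite -[m.*2]addn0 Kfixed_pointE //; case: (s m.+1). Qed.

Lemma Kfixed_point_even m : s m.+1.*2 = ~~ s m.+1.
Proof. by rewrite doubleS -addn1 Kfixed_pointE //; case: (s m.+1). Qed.

Lemma ssum_double k : (ssum s k.*2 + ssum s k)%N = k.*2.
Proof.
elim: k => [|k IHk]; first by rewrite /ssum big_geq.
rewrite doubleS !ssumS Kfixed_point_even -doubleS Kfixed_point_odd.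
by case: (s k.+1); lia.
Qed.

Lemma odd_ssum_double k : odd (ssum s k.*2) = odd (ssum s k).
Proof.
have := congr1 odd (ssum_double k); rewrite oddD odd_double.
by case: (odd _); case: (odd _).
Qed.

End FixedPoint.

Lemma big_nat_double (V : nmodType) (F : nat -> V) n :
  \sum_(0 <= k < n.*2) F k = \sum_(0 <= k < n) (F k.*2 + F k.*2.+1).
Proof.
elim: n => [|n IHn]; first by rewrite !big_geq.
by rewrite doubleS !big_nat_recr //= IHn addrA.
Qed.

Section Recurrences.
Context {K : pzRingType} {s : nat -> bool}.
Hypothesis hfix : is_Kfixed_point s.

Lemma epsk0 : epsk s 0 = 1 :> K.
Proof. by rewrite /epsk /ssum big_geq. Qed.

Lemma epsk_double k : epsk s k.*2 = epsk s k :> K.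
Proof. by rewrite /epsk -signr_odd odd_ssum_double // signr_odd. Qed.

Lemma epsk_doubleS k : epsk s k.*2.+1 = - epsk s k :> K.
Proof.
by rewrite {1}/epsk ssumS Kfixed_point_odd // addn1 exprS mulN1r -epsk_double.
Qed.

Lemma Xi_partialS (z : K) N : Xi_partial z N.+1 = (1 - z) * Xi_partial (z ^+ 2) N.
Proof.
rewrite /Xi_partial big_ord_recl /= expn0 expr1; congr (_ * _).
by apply: eq_bigr => i _; rewrite /bump /= add1n expnS exprM.
Qed.

End Recurrences.

Lemma Xi_partial_sum {K : comPzRingType} {s} (hfix : is_Kfixed_point s) N (z : K) :
  Xi_partial z N = \sum_(0 <= k < 2 ^ N) epsk s k * z ^+ k.
Proof.
elim: N z => [|N IHN] z.
  by rewrite /Xi_partial big_ord0 expn0 big_nat1 epsk0 mulr1.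
rewrite Xi_partialS IHN expnS mul2n big_nat_double mulr_sumr.
apply: eq_bigr => k _.
rewrite (epsk_double hfix) (epsk_doubleS hfix) -exprM -muln2 mulnC exprS; ring.
Qed.

Lemma cvg_expnl b : (1 < b)%N -> expn b @ \oo --> \oo.
Proof.
move=> b_gt1 P [n _ Pn]; exists n => // m /= le_nm; apply: Pn.
exact: leq_trans le_nm (ltnW (ltn_expl m b_gt1)).
Qed.

Definition Xi_term {K : pzRingType} (s : nat -> bool) (z : K) : K ^nat :=
  fun k => epsk s k * z ^+ k.

Lemma norm_Xi_term (K : numDomainType) s (z : K) k : `|Xi_term s z k| = `|z| ^+ k.
Proof. by rewrite normrM normrX normrN1 expr1n mul1r normrX. Qed.

Section XiLimit.
Context {K : numFieldType} {s : nat -> bool}.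
Hypothesis hfix : is_Kfixed_point s.

Section FixedArgument.
Context {z : K}.
Hypothesis cvg_Xi_series : cvgn (series (Xi_term s z)).

Lemma cvg_Xi_partial_series : Xi_partial z @ \oo --> limn (series (Xi_term s z)).
Proof.
have -> : Xi_partial z = series (Xi_term s z) \o expn 2.
  by apply/funext => N /=; rewrite (Xi_partial_sum hfix).
exact: cvg_comp (@cvg_expnl 2 isT) cvg_Xi_series.
Qed.

Lemma XiE : Xi z = limn (series (Xi_term s z)).
Proof. exact: cvg_lim cvg_Xi_partial_series. Qed.

Lemma cvg_Xi_partial : Xi_partial z @ \oo --> Xi z.
Proof. by rewrite XiE; exact: cvg_Xi_partial_series. Qed.

Lemma cvg_Xi_power_series :
  (fun N => 1 + \sum_(1 <= k < N) epsk s k * z ^+ k) @ \oo --> Xi z.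
Proof.
rewrite XiE; apply: cvg_trans cvg_Xi_series; apply: near_eq_cvg.
near=> N; rewrite /series /= big_ltn; last by near: N; exists 1%N.
by rewrite /Xi_term epsk0 mulr1.
Unshelve. all: end_near.
Qed.

End FixedArgument.

Lemma Xi_functional_eq (z : K) : cvgn (series (Xi_term s z)) ->
  cvgn (series (Xi_term s (z ^+ 2))) -> Xi z = (1 - z) * Xi (z ^+ 2).
Proof.
move=> cvg_z cvg_z2.
have lim_z : [sequence Xi_partial z n.+1]_n @ \oo --> Xi z.
  by rewrite cvg_shiftS; exact: cvg_Xi_partial cvg_z.
suff lim_z2 : [sequence Xi_partial z n.+1]_n @ \oo --> (1 - z) * Xi (z ^+ 2).
  exact: cvg_unique lim_z lim_z2.
have -> : [sequence Xi_partial z n.+1]_n = (fun n => (1 - z) * Xi_partial (z ^+ 2) n).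
  by apply/funext => n /=; rewrite Xi_partialS.
exact: cvgMl_tmp (cvg_Xi_partial cvg_z2).
Qed.

End XiLimit.

Lemma cvg_series_geometric_bound (R : realType) (u : R ^nat) (r : R) :
  0 <= r -> r < 1 -> (forall k, `|u k| <= r ^+ k) -> cvgn (series u).
Proof.
move=> r_ge0 r_lt1 u_le; apply: normed_cvg.
apply: (@series_le_cvg _ _ (geometric 1 r)) => [k|k|k|].
- exact: normr_ge0.
- by rewrite /= mul1r exprn_ge0.
- by rewrite /= mul1r.
- by apply: is_cvg_geometric_series; rewrite ger0_norm.
Qed.

Section ComplexSeries.
Context {R : realType}.
Local Notation C := (R[i] : numFieldType).

Lemma normc_real (a : R) : `|a%:C| = `|a|%:C.
Proof. by rewrite normc_def /= expr0n addr0 sqrtr_sqr. Qed.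

Lemma normc_ge_Im (w : R[i]) : `|complex.Im w|%:C <= `|w|.
Proof.
by rewrite -normrN -ReiNIm (le_trans (normc_ge_Re _)) // normrM normCi mulr1.
Qed.

Lemma cvg_real_complex {T : Type} {F : set_system T} {FF : Filter F}
    {f : T -> R} {a : R} :
  f @ F --> a -> (fun x => (f x)%:C) @ F --> (a%:C : C).
Proof.
move=> f_a; apply/(@cvgrPdist_lt _ C^o) => e.
rewrite ltcE => /andP[/eqP e_real e_gt0].
have -> : e = (complex.Re e)%:C by rewrite [LHS]complexE e_real mulr0 addr0.
move/cvgrPdist_lt: f_a => /(_ _ e_gt0); apply: filterS => x.
by rewrite -rmorphB normc_real ltcR.
Qed.

Lemma cvg_complex {T : Type} (F : set_system T) {FF : Filter F}
    (u : T -> R[i]) (a b : R) :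
  (fun x => complex.Re (u x)) @ F --> a -> (fun x => complex.Im (u x)) @ F --> b ->
  u @ F --> (a +i* b : C).
Proof.
move=> Re_a Im_b; rewrite [a +i* b]complexE /=.
have -> : u = (fun x => (complex.Re (u x))%:C + 'i * (complex.Im (u x))%:C).
  by apply/funext => x; rewrite [LHS]complexE.
apply: (@cvgD _ C^o); first exact: cvg_real_complex.
exact: (cvgMl_tmp (K := C) (cvg_real_complex Im_b)).
Qed.

(* [R[i]] has no complete normed-space structure in the library, so
   convergence is obtained from the real and imaginary parts. *)
Lemma cvg_series_complex_geometric_bound (u : C ^nat) (r : R) :
  0 <= r -> r < 1 -> (forall k, `|u k| <= (r ^+ k)%:C) -> cvgn (series u).
Proof.
move=> r_ge0 r_lt1 u_le.
have cvg_Re : cvgn (series (fun k => complex.Re (u k))).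
  apply: cvg_series_geometric_bound r_ge0 r_lt1 _ => k.
  by rewrite -lecR (le_trans (normc_ge_Re _)).
have cvg_Im : cvgn (series (fun k => complex.Im (u k))).
  apply: cvg_series_geometric_bound r_ge0 r_lt1 _ => k.
  by rewrite -lecR (le_trans (normc_ge_Im _)).
have Re_series : (fun n => complex.Re (series u n)) = series (fun k => complex.Re (u k)).
  by apply/funext => n; exact: (@raddf_sum _ _ (@complex.Re R : Rcomplex R -> R)).
have Im_series : (fun n => complex.Im (series u n)) = series (fun k => complex.Im (u k)).
  by apply/funext => n; exact: (@raddf_sum _ _ (@complex.Im R : Rcomplex R -> R)).
apply: (cvgP (limn (series (fun k => complex.Re (u k))) +i*
              limn (series (fun k => complex.Im (u k))) : C)).
by apply: cvg_complex; [rewrite Re_series | rewrite Im_series].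
Qed.

Lemma cvg_Xi_series_complex s (z : C) : `|z| < 1 -> cvgn (series (Xi_term s z)).
Proof.
move=> z_lt1; set r := Num.sqrt (complex.Re z ^+ 2 + complex.Im z ^+ 2).
have norm_z : `|z| = r%:C by exact: normc_def.
apply: (@cvg_series_complex_geometric_bound _ r) => [||k].
- exact: sqrtr_ge0.
- by rewrite -ltcR -norm_z.
- by rewrite norm_Xi_term norm_z rmorphXn.
Qed.

End ComplexSeries.

Lemma cvg_Xi_series_real {R : realType} s (z : R) :
  `|z| < 1 -> cvgn (series (Xi_term s z)).
Proof.
move=> z_lt1; apply: cvg_series_geometric_bound (normr_ge0 z) z_lt1 _ => k.
by rewrite norm_Xi_term.
Qed.

Lemma tk_epsk (R : numFieldType) s k : (tk s k)%:R = (1 - epsk s k) / 2 :> R.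
Proof.
rewrite /tk /epsk modn2 -signr_odd; case: (odd _) => /=.
  by rewrite expr1 opprK -mulr2n divff // pnatr_eq0.
by rewrite expr0 subrr mul0r.
Qed.

Lemma cvg_tau (R : realType) s : is_Kfixed_point s ->
  (fun N => \sum_(1 <= k < N) (tk s k)%:R * (2 ^- k : R)) @ \oo
    --> 1 - 2^-1 * Xi (2^-1 : R).
Proof.
move=> hfix; have half_lt1 : `|2^-1 : R| < 1.
  by rewrite ger0_norm ?invr_ge0 // invf_lt1 // ltr1n.
have -> : (fun N => \sum_(1 <= k < N) (tk s k)%:R * (2 ^- k : R)) =
    (fun N => 2^-1 * (series (geometric 1 2^-1) N - series (Xi_term s 2^-1) N)).
  apply/funext => -[|N]; first by rewrite /series /= !big_geq // subrr mulr0.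
  rewrite [RHS]mulrC /series /= -sumrB mulr_suml [in RHS]big_ltn //.
  rewrite {1}/Xi_term epsk0 expr0 !mulr1 subrr mul0r add0r.
  apply: eq_bigr => k _.
  by rewrite tk_epsk /Xi_term /= mul1r exprVn; field.
have -> : 1 - 2^-1 * Xi (2^-1 : R) = 2^-1 * (1 / (1 - 2^-1) - Xi (2^-1)).
  by field.
apply: cvgMl_tmp; apply: cvgB; first exact: cvg_geometric_series.
by rewrite (XiE hfix (cvg_Xi_series_real s _ half_lt1)); exact: cvg_Xi_series_real.
Qed.

Theorem mainTheorem11 (R : realType) (s : nat -> bool)
  (hs1 : s 1%N = true) (hfix : is_Kfixed_point s) :
  (forall z : R[i], `|z| < 1 ->
     [/\ Xi_partial z @ \oo --> Xi z,
         (fun N => 1 + \sum_(1 <= k < N) epsk s k * z ^+ k) @ \oo --> Xi z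
       & Xi z = (1 - z) * Xi (z ^+ 2)]) /\
  (fun N => \sum_(1 <= k < N) (tk s k)%:R * (2 ^- k : R)) @ \oo
     --> 1 - 2^-1 * Xi (2^-1 : R).
Proof.
(* [hs1] is redundant: it is [Kfixed_point_odd hfix 0]. *)
split=> [z z_lt1|]; last exact: cvg_tau.
have z2_lt1 : `|z ^+ 2| < 1 by rewrite normrX exprn_ilt1.
have cvg_z := cvg_Xi_series_complex s _ z_lt1.
have cvg_z2 := cvg_Xi_series_complex s _ z2_lt1.
split.
- exact (cvg_Xi_partial hfix cvg_z).
- exact (cvg_Xi_power_series hfix cvg_z).
- exact (Xi_functional_eq hfix z cvg_z cvg_z2).
Qed.
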